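(* Let $\rho=[uvwx]\subset\mathbb{R}^3$ be a unit rhombus. Suppose there is a coloring $\chi:\mathbb{R}^3\to\{1,2,3\}$ with no rainbow triangles such that $\chi(u)=\chi(v)=1$, $\chi(w)=2$, $\chi(x)=3$. Then $\rho$ cannot be domed.
   Context: A unit rhombus is a closed polygon $[uvwx]$ in $\mathbb{R}^3$ with all four sides of length $1$. A rainbow triangle for $\chi$ is a triple of points $x,y,z\in\mathbb{R}^3$ with $|xy|=|yz|=|zx|=1$ and $\{\chi(x),\chi(y),\chi(z)\}=\{1,2,3\}$. A closed polygon with unit edges can be domed if there is a finite connected 2-dimensional simplicial complex which is a compact surface with a single boundary cycle, with a map to $\mathbb{R}^3$ linear on simplices sending each triangle to a unit equilateral triangle and the boundary cycle onto the polygon vertex by vertex in cyclic order (no embedding/immersion required). *)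

From mathcomp Require Import all_boot.
From Stdlib Require Import Reals.

Set Implicit Arguments.
Unset Strict Implicit.
Unset Printing Implicit Defensive.

Definition point : Type := (R * R * R)%type.

Definition sqdist (p q : point) : R :=
  let '(p1, p2, p3) := p in let '(q1, q2, q3) := q in
  ((p1 - q1) * (p1 - q1) + (p2 - q2) * (p2 - q2) + (p3 - q3) * (p3 - q3))%R.

Definition unit_dist (p q : point) : Prop := sqdist p q = 1%R.

Definition unit_rhombus (u v w x : point) : Prop :=
  unit_dist u v /\ unit_dist v w /\ unit_dist w x /\ unit_dist x u.

Definition is_3coloring (chi : point -> nat) : Prop :=
  forall p, chi p = 1 \/ chi p = 2 \/ chi p = 3.

Definition rainbow_triangle (chi : point -> nat) (x y z : point) : Prop :=
  unit_dist x y /\ unit_dist y z /\ unit_dist z x /\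
  (forall c : nat, (c = 1 \/ c = 2 \/ c = 3) <-> (c = chi x \/ c = chi y \/ c = chi z)).

Definition no_rainbow (chi : point -> nat) : Prop :=
  forall x y z, ~ rainbow_triangle chi x y z.

(** Finite 2-dimensional simplicial complexes on vertex set 'I_n, given by
    their set T of triangles (2-simplices); edges/vertices are faces of
    triangles (the complex is pure 2-dimensional). *)
Section Complex.
Variable n : nat.
Variable T : {set {set 'I_n}}.

Definition edge_deg (e : {set 'I_n}) : nat := #|[set t in T | e \subset t]|.

Definition is_edge (e : {set 'I_n}) : bool :=
  (#|e| == 2) && [exists t in T, e \subset t].

Definition adj : rel 'I_n := fun a b => [exists t in T, (a \in t) && (b \in t)].

Definition in_link (a b : 'I_n) : bool := (b != a) && adj a b.
Definition link_rel (a : 'I_n) : rel 'I_n := fun b c => [set a; b; c] \in T.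

(** T is a compact, connected combinatorial surface (with boundary):
    pure 2-dimensional, every edge in one or two triangles, every vertex
    link connected (hence a path or a cycle), and the 1-skeleton connected. *)
Definition connected_surface : Prop :=
  [/\ forall t, t \in T -> #|t| = 2.+1,
      forall a : 'I_n, exists2 t, t \in T & a \in t,
      forall e, is_edge e -> edge_deg e = 1 \/ edge_deg e = 2,
      forall a b c, in_link a b -> in_link a c -> connect (link_rel a) b c
    & forall a b, connect adj a b].

Definition boundary_edge (e : {set 'I_n}) : bool := is_edge e && (edge_deg e == 1).

Definition boundary_4cycle (b0 b1 b2 b3 : 'I_n) : Prop :=
  uniq [:: b0; b1; b2; b3] /\
  forall e, boundary_edge e <->
    e \in [:: [set b0; b1]; [set b1; b2]; [set b2; b3]; [set b3; b0]].

End Complex.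

(** The closed polygon [uvwx] (unit edges) can be domed: there is a finite
    connected simplicial surface with a single boundary cycle b0 b1 b2 b3 and
    a map f (determining the simplexwise-linear map) sending every triangle to a
    unit equilateral triangle and b0,b1,b2,b3 to u,v,w,x. *)
Definition domable (u v w x : point) : Prop :=
  exists (n : nat) (T : {set {set 'I_n}}) (f : 'I_n -> point) (b0 b1 b2 b3 : 'I_n),
    [/\ connected_surface T,
        boundary_4cycle T b0 b1 b2 b3,
        (forall t a b, t \in T -> a \in t -> b \in t -> a != b -> unit_dist (f a) (f b))
      & [/\ f b0 = u, f b1 = v, f b2 = w & f b3 = x]].

From mathcomp Require Import all_boot.
From Stdlib Require Import Reals.

Set Implicit Arguments.
Unset Strict Implicit.
Unset Printing Implicit Defensive.

(* Proof idea: a parity (Sperner-type) count.  Pull the colouring back along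
   the doming map, g := chi \o f, and count the "flags" (a, b, t) where t is a
   triangle of the dome, a is a vertex of t of colour 1 and b one of colour 2.
   - Counted triangle by triangle, a triangle contributes
     #|colour-1 vertices| * #|colour-2 vertices|, which is odd only when both
     factors are 1, i.e. only when the triangle is rainbow.  Its image is then
     a rainbow unit triangle, which the colouring forbids; so the count is even.
   - Counted edge by edge, a 1-2 edge {a,b} contributes the number of
     triangles containing it, which is 1 or 2 and is odd only on the boundary.
     The only 1-2 edge of the boundary cycle u v w x (colours 1 1 2 3) is vw,
     so the count is odd. *)

Lemma sum_even (I : finType) (P : pred I) (F : I -> nat) :
  (forall i, P i -> ~~ odd (F i)) -> ~~ odd (\sum_(i | P i) F i).
Proof.
move=> evenF; apply: (big_ind (fun m => ~~ odd m)) => // m k em ek.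
by rewrite oddD (negbTE em) (negbTE ek).
Qed.

Section FlagCount.
Variables (n : nat) (T : {set {set 'I_n}}) (g : 'I_n -> nat).

Definition colour_class (t : {set 'I_n}) (i : nat) : {set 'I_n} :=
  [set a in t | g a == i].

Definition flag_count (i j : nat) : nat :=
  \sum_(t in T) #|colour_class t i| * #|colour_class t j|.

(* The size of a colour class as a sum of indicators, the form in which the
   two ways of counting flags can be exchanged. *)
Lemma card_colour_class (t : {set 'I_n}) (i : nat) :
  #|colour_class t i| = \sum_a ((a \in t) && (g a == i)).
Proof.
rewrite -sum1_card big_mkcond /=; apply: eq_bigr => a _.
by rewrite !inE; case: (_ && _).
Qed.

Lemma flag_count_by_edges (i j : nat) :
  flag_count i j =
  \sum_a \sum_b ((g a == i) && (g b == j)) * edge_deg T [set a; b].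
Proof.
have per_triangle t : #|colour_class t i| * #|colour_class t j| =
    \sum_a \sum_b ((a \in t) && (g a == i)) * ((b \in t) && (g b == j)).
  rewrite !card_colour_class big_distrl; apply: eq_bigr => a _.
  by rewrite big_distrr.
rewrite /flag_count (eq_bigr _ (fun t _ => per_triangle t)) exchange_big.
apply: eq_bigr => a _; rewrite exchange_big; apply: eq_bigr => b _.
rewrite /edge_deg -sum1_card big_distrr [LHS]big_mkcond [RHS]big_mkcond /=.
apply: eq_bigr => t _; rewrite !inE subUset !sub1set.
by case: (t \in T); case: (a \in t); case: (b \in t); case: (g a == i);
   case: (g b == j).
Qed.

Lemma odd_flags_triangle (t : {set 'I_n}) (i j : nat) :
  #|t| = 3 -> i != j -> odd (#|colour_class t i| * #|colour_class t j|) ->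
  exists a b c, [/\ a \in t, b \in t & c \in t] /\
                [/\ g a = i, g b = j, g c != i & g c != j].
Proof.
move=> card_t ne_ij; rewrite oddM => /andP [odd_i odd_j].
have disj : colour_class t i :&: colour_class t j = set0.
  apply/setP => a; rewrite !inE; case: (a \in t) => //=.
  by apply/negP => /andP [/eqP -> /eqP eij]; rewrite eij eqxx in ne_ij.
have sub : colour_class t i :|: colour_class t j \subset t.
  by rewrite subUset; apply/andP; split; apply/subsetP => a; rewrite inE => /andP [].
have card_ij : #|colour_class t i :|: colour_class t j| =
               #|colour_class t i| + #|colour_class t j|.
  by rewrite cardsU disj cards0 subn0.
have [a ai] : exists a, a \in colour_class t i by apply/card_gt0P; exact: odd_gt0.
have [b bj] : exists b, b \in colour_class t j by apply/card_gt0P; exact: odd_gt0.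
have [c /setDP [ct cij]] :
    exists c, c \in t :\: (colour_class t i :|: colour_class t j).
  apply/card_gt0P; rewrite cardsD (setIidPr sub) card_ij card_t.
  move: (subset_leq_card sub) odd_i odd_j; rewrite card_ij card_t.
  by case: #|colour_class t i| => [|[|[|[]]]] //; case: #|colour_class t j| => [|[|[|[]]]].
move: ai bj cij; rewrite !inE => /andP [at_ /eqP gai] /andP [bt /eqP gbj].
by rewrite ct /= negb_or => /andP [gci gcj]; exists a, b, c.
Qed.

End FlagCount.

Lemma odd_edge_deg_boundary (n : nat) (T : {set {set 'I_n}}) (a b : 'I_n) :
  (forall e, is_edge T e -> edge_deg T e = 1 \/ edge_deg T e = 2) ->
  a != b -> odd (edge_deg T [set a; b]) -> boundary_edge T [set a; b].
Proof.
move=> deg12 ne_ab odd_deg.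
have edge_ab : is_edge T [set a; b].
  rewrite /is_edge cards2 ne_ab /=.
  move: (odd_gt0 odd_deg); rewrite /edge_deg card_gt0 => /set0Pn [t].
  by rewrite inE => /andP [tT sub]; apply/existsP; exists t; rewrite tT sub.
rewrite /boundary_edge edge_ab /=.
by case: (deg12 _ edge_ab) odd_deg => ->.
Qed.

Lemma rainbow_of_colours (chi : point -> nat) (p q r : point) :
  unit_dist p q -> unit_dist q r -> unit_dist r p ->
  chi p = 1 -> chi q = 2 -> chi r = 3 -> rainbow_triangle chi p q r.
Proof.
move=> dpq dqr drp cp cq cr; do 3 (split; first by []).
by move=> m; rewrite cp cq cr.
Qed.

Lemma even_flag_count (chi : point -> nat) (n : nat) (T : {set {set 'I_n}})
    (f : 'I_n -> point) :
  is_3coloring chi -> no_rainbow chi ->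
  (forall t, t \in T -> #|t| = 3) ->
  (forall t a b, t \in T -> a \in t -> b \in t -> a != b ->
     unit_dist (f a) (f b)) ->
  ~~ odd (flag_count T (fun a => chi (f a)) 1 2).
Proof.
move=> col3 no_rb tri3 unit_f; apply: sum_even => t tT; apply/negP => odd_t.
have [a [b [c [[at_ bt ct] [ca cb cc1 cc2]]]]] :=
  odd_flags_triangle (i := 1) (j := 2) (tri3 t tT) isT odd_t.
have cc : chi (f c) = 3 by move: cc1 cc2; case: (col3 (f c)) => [|[]] ->.
have distinct p q : chi (f p) != chi (f q) -> p != q by apply: contraNneq => ->.
apply: (no_rb (f a) (f b) (f c)); apply: rainbow_of_colours => //;
  apply: (unit_f t) => //; apply: distinct; by rewrite ?ca ?cb ?cc.
Qed.

Section BoundaryParity.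
Variables (n : nat) (T : {set {set 'I_n}}) (g : 'I_n -> nat) (b0 b1 b2 b3 : 'I_n).
Hypothesis deg12 :
  forall e, is_edge T e -> edge_deg T e = 1 \/ edge_deg T e = 2.
Hypothesis boundary : boundary_4cycle T b0 b1 b2 b3.
Hypotheses (g0 : g b0 = 1) (g1 : g b1 = 1) (g2 : g b2 = 2) (g3 : g b3 = 3).

Lemma boundary_12_edge (a b : 'I_n) :
  g a = 1 -> g b = 2 -> boundary_edge T [set a; b] -> a = b1 /\ b = b2.
Proof.
move: boundary => [_ bd] ga gb /bd.
have ina : a \in [set a; b] by rewrite !inE eqxx.
have inb : b \in [set a; b] by rewrite !inE eqxx orbT.
rewrite !inE => /or4P [] /eqP eq_ab; rewrite eq_ab !inE in ina inb;
  case/orP: ina => /eqP ea; case/orP: inb => /eqP eb; subst a b;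
  by [split | congruence].
Qed.

Lemma even_flags_off_boundary (a b : 'I_n) : (a != b1) || (b != b2) ->
  ~~ odd (((g a == 1) && (g b == 2)) * edge_deg T [set a; b]).
Proof.
move=> ne; case: eqP => [ga|_]; last by rewrite mul0n.
case: eqP => [gb|_]; last by rewrite mul0n.
rewrite mul1n; apply/negP => odd_deg.
have ne_ab : a != b by apply/eqP => eab; rewrite eab gb in ga.
have [ea eb] := boundary_12_edge ga gb (odd_edge_deg_boundary deg12 ne_ab odd_deg).
by rewrite ea eb !eqxx in ne.
Qed.

Lemma odd_flag_count : odd (flag_count T g 1 2).
Proof.
have deg_b1b2 : edge_deg T [set b1; b2] = 1.
  have /andP [_ /eqP //] : boundary_edge T [set b1; b2].
  by apply/boundary.2; rewrite !inE eqxx orbT.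
have even_b1 : ~~ odd (\sum_(b < n | b != b2)
                 ((g b1 == 1) && (g b == 2)) * edge_deg T [set b1; b]).
  by apply: sum_even => b nb; apply: even_flags_off_boundary; rewrite nb orbT.
have even_rest : ~~ odd (\sum_(a < n | a != b1) \sum_b
                 ((g a == 1) && (g b == 2)) * edge_deg T [set a; b]).
  apply: sum_even => a na; apply: sum_even => b _.
  by apply: even_flags_off_boundary; rewrite na.
rewrite flag_count_by_edges (bigD1 b1) //= (bigD1 b2) //= !oddD.
by rewrite (negbTE even_b1) (negbTE even_rest) g1 g2 deg_b1b2.
Qed.

End BoundaryParity.

Theorem proposition5p9 (u v w x : point) (chi : point -> nat) :
  unit_rhombus u v w x ->
  is_3coloring chi ->
  no_rainbow chi ->
  chi u = 1%nat -> chi v = 1%nat -> chi w = 2%nat -> chi x = 3%nat ->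
  ~ domable u v w x.
Proof.
move=> _ col3 no_rb cu cv cw cx
  [n [T [f [b0 [b1 [b2 [b3 [[tri3 _ deg12 _ _] bd unit_f [f0 f1 f2 f3]]]]]]]]].
have := even_flag_count col3 no_rb tri3 unit_f.
by rewrite (odd_flag_count deg12 bd) // ?f0 ?f1 ?f2 ?f3.
Qed.
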